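(* Let $R$ be a commutative ring with identity. (1) If $R$ is semi-complemented, then $R$ is $\pi$-complemented. (2) If $R$ is $\pi$-complemented, then $R$ is almost complemented.
   Context: $\mathfrak{N}(R)$ is the nilradical and $\mathrm{reg}(R)$ the set of regular elements. An element $a$ is complemented if there is $b$ with $ab=0$ and $a+b\in\mathrm{reg}(R)$. $R$ is semi-complemented if every element of $R\setminus\mathfrak{N}(R)$ is complemented; $R$ is $\pi$-complemented if every element has some power $a^n$ ($n\ge1$) that is complemented; $R$ is almost complemented if $R/\mathfrak{N}(R)$ is a complemented ring (every element of it complemented in it). *)

From mathcomp Require Import all_boot all_algebra.
Set Implicit Arguments. Unset Strict Implicit. Unset Printing Implicit Defensive.
Import GRing.Theory.
Local Open Scope ring_scope.

Definition nilrad (R : comPzRingType) (x : R) : Prop := exists n : nat, x ^+ n = 0.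

Definition regular (R : comPzRingType) (x : R) : Prop := forall c : R, x * c = 0 -> c = 0.

Definition complemented (R : comPzRingType) (a : R) : Prop :=
  exists b : R, a * b = 0 /\ regular (a + b).

Definition semi_complemented (R : comPzRingType) : Prop :=
  forall a : R, ~ nilrad a -> complemented a.

Definition pi_complemented (R : comPzRingType) : Prop :=
  forall a : R, exists n : nat, (1 <= n)%N /\ complemented (a ^+ n).

(* Quotient R/N(R), described through representatives: the class of x is zero
   iff x \in N(R).  A class [a+b] is regular in R/N(R) iff for every class [c],
   [(a+b) c] = 0 implies [c] = 0; [a][b] = 0 iff a*b \in N(R). *)
Definition regular_mod_nil (R : comPzRingType) (x : R) : Prop :=
  forall c : R, nilrad (x * c) -> nilrad c.

Definition complemented_mod_nil (R : comPzRingType) (a : R) : Prop :=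
  exists b : R, nilrad (a * b) /\ regular_mod_nil (a + b).

Definition almost_complemented (R : comPzRingType) : Prop :=
  forall a : R, complemented_mod_nil a.

(* In the reduced ring R/N(R), if a^n b = 0 then also ab = 0, and a + b is
   regular as soon as a^n + b is: from ab = 0 and (a + b)c = 0 one gets
   b^2 c = 0, hence bc = 0 (no nilpotents), then ac = 0 and so (a^n + b)c = 0.
   So a complement of a power of a, taken modulo N(R), is a complement of a.
   For (1), a non-nilpotent a is complemented by hypothesis, while a nilpotent
   a has a power equal to 0, which is complemented by 1. *)
From mathcomp Require Import all_boot all_algebra.
From mathcomp Require Import ring.
From Stdlib Require Import Classical_Prop.

Set Implicit Arguments.
Unset Strict Implicit.
Unset Printing Implicit Defensive.

Import GRing.Theory.
Local Open Scope ring_scope.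

Section Nilradical.
Variable R : comPzRingType.
Implicit Types a b c x y : R.

Lemma nilradD x y : nilrad x -> nilrad y -> nilrad (x + y).
Proof.
move=> [p xp0] [q yq0]; exists (p + q)%N; rewrite exprDn big1 // => i _.
have [le_qi | lt_iq] := leqP q i.
  by rewrite -(subnKC le_qi) exprD yq0 mul0r mulr0 mul0rn.
by rewrite -addnBA 1?ltnW // exprD xp0 !mul0r mul0rn.
Qed.

Lemma nilradMr x y : nilrad x -> nilrad (x * y).
Proof. by move=> [p xp0]; exists p; rewrite exprMn xp0 mul0r. Qed.

Lemma nilradMl x y : nilrad y -> nilrad (x * y).
Proof. by rewrite mulrC; apply: nilradMr. Qed.

Lemma nilradB x y : nilrad x -> nilrad y -> nilrad (x - y).
Proof. by move=> nx ny; rewrite -mulN1r; apply/nilradD/nilradMl. Qed.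

Lemma nilrad_exp x n : nilrad (x ^+ n) -> nilrad x.
Proof. by move=> [p xnp0]; exists (n * p)%N; rewrite exprM. Qed.

Lemma nilrad_expS x : nilrad x -> exists n, x ^+ n.+1 = 0.
Proof. by move=> [p xp0]; exists p; rewrite exprS xp0 mulr0. Qed.

Lemma nilradMexp a b n : nilrad (a ^+ n.+1 * b) -> nilrad (a * b).
Proof.
move=> nab; apply: (@nilrad_exp _ n.+1).
by rewrite exprMn [b ^+ _]exprS mulrA; apply: nilradMr.
Qed.

Lemma regularX x n : regular x -> regular (x ^+ n).
Proof.
move=> regx; elim: n => [|n IHn] c; first by rewrite expr0 mul1r.
by rewrite exprS -mulrA => /regx /IHn.
Qed.

Lemma regular_mod_nil_regular x : regular x -> regular_mod_nil x.
Proof.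
by move=> regx c [k xck0]; exists k; apply: (@regularX x k regx); rewrite -exprMn.
Qed.

Lemma complemented_mod_nil_complemented a :
  complemented a -> complemented_mod_nil a.
Proof.
move=> [b [ab0 reg_ab]]; exists b; split; first by exists 1%N; rewrite ab0.
exact: regular_mod_nil_regular.
Qed.

Lemma nilrad_mul_orth a b c :
  nilrad (a * b) -> nilrad ((a + b) * c) -> nilrad (b * c).
Proof.
move=> nab nabc; apply: (@nilrad_exp _ 2).
have nbbc : nilrad (b * b * c).
  have -> : b * b * c = b * ((a + b) * c) - a * b * c.
    by ring.
  by apply: nilradB; [apply: nilradMl | apply: nilradMr].
by rewrite exprMn expr2 mulrA; apply: nilradMr.
Qed.

Lemma complemented_mod_nil_exp a n :
  (0 < n)%N -> complemented_mod_nil (a ^+ n) -> complemented_mod_nil a.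
Proof.
case: n => // n _ [b [nanb reg_anb]]; have nab := nilradMexp nanb.
exists b; split=> // c nabc.
have nbc := nilrad_mul_orth nab nabc.
have nac : nilrad (a * c).
  by apply: (@nilrad_mul_orth b); [rewrite mulrC | rewrite addrC].
by apply: reg_anb; rewrite mulrDl exprSr -mulrA; apply: nilradD (nilradMl _ nac) nbc.
Qed.

Lemma complemented0 : complemented (0 : R).
Proof. by exists 1; rewrite mul0r add0r; split=> // c; rewrite mul1r. Qed.

End Nilradical.

Theorem mainTheorem20 (R : comPzRingType) :
  (semi_complemented R -> pi_complemented R) /\
  (pi_complemented R -> almost_complemented R).
Proof.
split=> [semiR a | piR a].
  have [/nilrad_expS [n an0] | /semiR ca] := classic (nilrad a).
    by exists n.+1; rewrite an0; split=> //; apply: complemented0.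
  by exists 1%N; rewrite expr1.
have [n [n_gt0 can]] := piR a.
exact/(complemented_mod_nil_exp n_gt0)/complemented_mod_nil_complemented.
Qed.
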